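(* Let $P(t,q)=\log\big(\sum_{n=1}^\infty 2^{-nt}e^{2^nq}\big)$ and $D_1=\{(t,q):t\ge0,\ q<0\}$. For $(t,q)\in D_1$, $$\frac{\partial P}{\partial q}(t,q)=\frac{\sum_{n\ge1}2^{-n(t-1)}e^{2^nq}}{\sum_{n\ge1}2^{-nt}e^{2^nq}}.$$ Consequently: (1) for fixed $0<t\le1$, $\lim_{q\to0^-}\frac{\partial P}{\partial q}(t,q)=\infty$; (2) $\lim_{(t,q)\to(0,0)}\frac{\partial P}{\partial q}(t,q)=\infty$ (with $(t,q)\in D_1$); (3) for $t\ge0$ and $q<0$, $\frac{\partial P}{\partial q}(t,q)>2$, and for fixed $t\ge0$, $\lim_{q\to-\infty}\frac{\partial P}{\partial q}(t,q)=2$. *)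

From Stdlib Require Import Reals.
From Coquelicot Require Export Coquelicot.
Open Scope R_scope.

(* n-th term (n >= 1) of the series defining P: 2^{-n t} e^{2^n q}.
   We index by k : nat with n = k+1 so that Coquelicot's Series (from 0)
   sums over n >= 1. *)
Definition Pterm (t q : R) (k : nat) : R :=
  Rpower 2 (- (INR (S k) * t)) * exp (2 ^ (S k) * q).

Definition P (t q : R) : R := ln (Series (Pterm t q)).

Definition Pnum_term (t q : R) (k : nat) : R :=
  Rpower 2 (- (INR (S k) * (t - 1))) * exp (2 ^ (S k) * q).

Definition dPdq (t q : R) : R := Derive (fun x => P t x) q.

From Stdlib Require Import Reals Lra Lia.
From Coquelicot Require Import Coquelicot.
Open Scope R_scope.

(* Write P = ln S with S(q) = sum_n a_n e^(x_n q), weights a_n = 2^(-n t) <= 1 and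
   frequencies x_n = 2^n.  For q < 0 the factor e^(x_n q) beats every power of x_n, so S
   and N = sum_n a_n x_n e^(x_n q) converge and the second-order Taylor remainders of the
   terms are summable: S is differentiable termwise and dP/dq = N / S, the average of the
   frequencies x_n >= 2 under the weights a_n e^(x_n q).
   - The average exceeds 2 because x_2 > x_1 = 2; as q -> -oo the weight of n = 1 dominates
     all the others by a factor e^(q + 1), so the average tends to 2.
   - For fixed 0 < t <= 1, S stays below sum_n a_n < oo, while every n with x_n |q| <= 1/2
     contributes at least 1/2 to N.
   - As (t, q) -> (0, 0) the first L terms of S are all >= 1/2, so S is large; since every
     term is <= 1, at least half of the mass of S sits at frequencies above any fixed 2^K. *)

Lemma exp_le_exp (x y : R) : x <= y -> exp x <= exp y.
Proof.
  intros Hxy; destruct (Req_dec x y) as [->|Hne]; [lra|].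
  apply Rlt_le, exp_increasing; lra.
Qed.

Lemma exp_mul_INR (n : nat) (x : R) : exp (INR n * x) = exp x ^ n.
Proof. rewrite <- Rpower_pow by apply exp_pos. unfold Rpower. now rewrite ln_exp. Qed.

Lemma pow_mul_exp_opp_le (n : nat) (c y : R) : (0 < n)%nat -> 0 < c -> 0 <= y ->
  y ^ n * exp (- (c * y)) <= (INR n / c) ^ n.
Proof.
  intros Hn Hc Hy.
  assert (HnR : 0 < INR n) by (apply lt_0_INR; exact Hn).
  set (u := c * y / INR n).
  assert (Hu : 0 <= u)
    by (unfold u; apply Rmult_le_pos; [nra | apply Rlt_le, Rinv_0_lt_compat; lra]).
  assert (Hun : u ^ n <= exp (c * y)).
  { replace (c * y) with (INR n * u) by (unfold u; field; lra).
    rewrite exp_mul_INR. apply pow_incr. pose proof (exp_ineq1_le u). lra. }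
  assert (Hexp : exp (c * y) * exp (- (c * y)) = 1).
  { rewrite <- exp_plus, Rplus_opp_r. apply exp_0. }
  replace (y ^ n) with ((INR n / c) ^ n * u ^ n)
    by (unfold u; rewrite <- Rpow_mult_distr; f_equal; field; lra).
  assert (0 <= (INR n / c) ^ n) by (apply pow_le, Rlt_le, Rdiv_lt_0_compat; lra).
  pose proof (exp_pos (- (c * y))).
  rewrite Rmult_assoc. rewrite <- (Rmult_1_r ((INR n / c) ^ n)) at 2.
  apply Rmult_le_compat_l; [lra|]. rewrite <- Hexp.
  apply Rmult_le_compat_r; lra.
Qed.

Lemma exp_taylor_remainder_le (d : R) : Rabs (exp d - 1 - d) <= d ^ 2 * exp (Rabs d).
Proof.
  pose proof (exp_ineq1_le d) as Hd.
  pose proof (exp_ineq1_le (- d)) as Hmd.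
  assert (Hinv : exp (- d) * exp d = 1) by (rewrite <- exp_plus, Rplus_opp_l; apply exp_0).
  assert (Hup : exp d - 1 <= d * exp d).
  { pose proof (exp_pos d).
    assert ((1 - d) * exp d <= exp (- d) * exp d) by (apply Rmult_le_compat_r; lra). nra. }
  rewrite Rabs_pos_eq by lra.
  destruct (Rle_or_lt 0 d) as [Hpos|Hneg].
  - rewrite Rabs_pos_eq by lra. nra.
  - rewrite Rabs_left by lra. nra.
Qed.

Lemma INR_le_pow2 (n : nat) : INR n <= 2 ^ n.
Proof. pose proof (Rle_pow_lin 1 n ltac:(lra)). replace (1 + 1) with 2 in * by ring. lra. Qed.

Lemma sum_f_R0_le_Series (a : nat -> R) (n : nat) :
  (forall k, 0 <= a k) -> ex_series a -> sum_f_R0 a n <= Series a.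
Proof.
  intros Ha Ea.
  rewrite (Series_incr_n a (S n)) by (lia || exact Ea). simpl Init.Nat.pred.
  assert (0 <= Series (fun k => a (S n + k)%nat)).
  { rewrite <- (Rmult_0_l (Series (fun k => a (S n + k)%nat))), <- Series_scal_l.
    apply Series_le; [intros k; rewrite Rmult_0_l; split; [lra | apply Ha]|].
    now apply (ex_series_incr_n a (S n)). }
  lra.
Qed.

Lemma Series_ge_first_terms (a : nat -> R) (c : R) (K : nat) :
  (forall k, 0 <= a k) -> ex_series a -> (forall k, (k < K)%nat -> c <= a k) ->
  INR K * c <= Series a.
Proof.
  intros Ha Ea Hc. destruct K as [|K].
  - rewrite Rmult_0_l.
    apply Rle_trans with (sum_f_R0 a 0); [apply Ha | now apply sum_f_R0_le_Series].
  - apply Rle_trans with (sum_f_R0 a K); [|now apply sum_f_R0_le_Series].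
    rewrite Rmult_comm, <- sum_cte. apply sum_Rle. intros k Hk. apply Hc. lia.
Qed.


Lemma is_derive_Series_remainder (f : R -> nat -> R) (f' g : nat -> R) (q delta : R) :
  0 < delta -> ex_series (f q) -> ex_series f' -> ex_series g ->
  (forall h k, Rabs h < delta -> Rabs (f (q + h) k - f q k - h * f' k) <= g k * h ^ 2) ->
  is_derive (fun x => Series (f x)) q (Series f').
Proof.
  intros Hdelta Ef Ef' Eg Hrem.
  apply is_derive_Reals; intros eps Heps.
  set (C := Rabs (Series g) + 1).
  assert (HC : 0 < C) by (pose proof (Rabs_pos (Series g)); unfold C; lra).
  assert (Hmin : 0 < Rmin delta (eps / C)) by (apply Rmin_pos; [lra | apply Rdiv_lt_0_compat; lra]).
  exists (mkposreal _ Hmin); simpl; intros h Hh0 Hh.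
  assert (Hhd : Rabs h < delta) by (pose proof (Rmin_l delta (eps / C)); lra).
  assert (Hhe : Rabs h < eps / C) by (pose proof (Rmin_r delta (eps / C)); lra).
  set (r k := f (q + h) k - f q k - h * f' k).
  assert (Ehf' : ex_series (fun k => h * f' k))
    by (apply (ex_series_scal_l (V := R_NormedModule)); exact Ef').
  assert (Er : ex_series (fun k => Rabs (r k))).
  { apply (ex_series_le (V := R_CompleteNormedModule) _ (fun k => g k * h ^ 2)).
    - intros k. change (Rabs (Rabs (r k)) <= g k * h ^ 2). rewrite Rabs_Rabsolu. now apply Hrem.
    - now apply ex_series_scal_r. }
  assert (Efh : ex_series (f (q + h))).
  { apply (ex_series_ext (fun k => plus (r k) (plus (f q k) (h * f' k)))).
    - intros k. unfold r, plus; simpl. ring.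
    - apply (ex_series_plus (V := R_NormedModule) r (fun k => plus (f q k) (h * f' k)));
        [now apply ex_series_Rabs | now apply (ex_series_plus (V := R_NormedModule) (f q))]. }
  assert (Hr : Series r = Series (f (q + h)) - Series (f q) - h * Series f').
  { unfold r. rewrite Series_minus, Series_minus, Series_scal_l; auto.
    apply (ex_series_minus (V := R_NormedModule)); auto. }
  assert (Hbound : Rabs (Series r) <= Rabs (Series g) * h ^ 2).
  { apply Rle_trans with (1 := Series_Rabs r Er).
    apply Rle_trans with (Series g * h ^ 2);
      [|apply Rmult_le_compat_r; [apply pow2_ge_0 | apply Rle_abs]].
    rewrite <- Series_scal_r. apply Series_le; [|now apply ex_series_scal_r].
    intros k; split; [apply Rabs_pos | now apply Hrem]. }
  replace ((Series (f (q + h)) - Series (f q)) / h - Series f') with (Series r / h)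
    by (rewrite Hr; field; exact Hh0).
  assert (Hh2 : h ^ 2 = Rabs h * Rabs h) by (rewrite <- Rabs_mult, Rabs_pos_eq; [ring | nra]).
  assert (Hah : 0 < Rabs h) by (apply Rabs_pos_lt; exact Hh0).
  unfold Rdiv. rewrite Rabs_mult, Rabs_inv.
  apply (Rmult_lt_reg_r (Rabs h)); [exact Hah|].
  rewrite Rmult_assoc, Rinv_l, Rmult_1_r by lra.
  apply Rle_lt_trans with (1 := Hbound). rewrite Hh2.
  apply Rle_lt_trans with (C * Rabs h * Rabs h).
  { rewrite (Rmult_assoc C). apply Rmult_le_compat_r; [nra | unfold C; lra]. }
  assert (C * Rabs h < eps).
  { replace eps with (C * (eps / C)) by (field; lra). apply Rmult_lt_compat_l; lra. }
  nra.
Qed.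

Lemma ex_series_pow_mul_exp (a : nat -> R) (m : nat) (q : R) :
  q < 0 -> (forall k, 0 <= a k <= 1) ->
  ex_series (fun k => a k * (2 ^ S k) ^ m * exp (2 ^ S k * q)).
Proof.
  intros Hq Ha.
  set (B := (INR (S m) / - q) ^ S m).
  apply (ex_series_le (V := R_CompleteNormedModule) _ (fun k => (/ 2) ^ k * B)).
  2: { apply ex_series_scal_r, ex_series_geom. rewrite Rabs_pos_eq; lra. }
  intros k. change (Rabs (a k * (2 ^ S k) ^ m * exp (2 ^ S k * q)) <= (/ 2) ^ k * B).
  set (x := 2 ^ S k).
  assert (Hx : 2 <= x) by (unfold x; simpl; pose proof (pow_R1_Rle 2 k); lra).
  assert (Hxm : 0 <= x ^ m) by (apply pow_le; lra).
  pose proof (exp_pos (x * q)) as He.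
  destruct (Ha k) as [Ha0 Ha1].
  (* [x ^ S m * exp (x * q) <= B], so the terms are at most [B / x <= 2 * B / x = (/ 2) ^ k * B] *)
  assert (Hmoment : x ^ S m * exp (x * q) <= B).
  { pose proof (pow_mul_exp_opp_le (S m) (- q) x ltac:(lia) ltac:(lra) ltac:(lra)) as Hb.
    now replace (- (- q * x)) with (x * q) in Hb by ring. }
  rewrite Rabs_pos_eq by (apply Rmult_le_pos; [apply Rmult_le_pos|]; lra).
  apply Rle_trans with (x ^ m * exp (x * q)).
  { rewrite Rmult_assoc. rewrite <- (Rmult_1_l (x ^ m * exp (x * q))) at 2.
    apply Rmult_le_compat_r; [apply Rmult_le_pos|]; lra. }
  replace ((/ 2) ^ k * B) with (2 * B / x)
    by (unfold x; rewrite pow_inv; simpl; field; apply pow_nonzero; lra).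
  apply (Rmult_le_reg_r x); [lra|].
  replace (2 * B / x * x) with (2 * B) by (field; lra).
  replace (x ^ m * exp (x * q) * x) with (x ^ S m * exp (x * q)) by (simpl; ring).
  pose proof (pow_le x (S m)). nra.
Qed.

Definition weight (t : R) (k : nat) : R := Rpower 2 (- (INR (S k) * t)).

Lemma Pterm_weight (t q : R) (k : nat) : Pterm t q k = weight t k * exp (2 ^ S k * q).
Proof. reflexivity. Qed.

Lemma weight_pos (t : R) (k : nat) : 0 < weight t k.
Proof. apply exp_pos. Qed.

Lemma weight_le_weight0 (t : R) (k : nat) : 0 <= t -> weight t k <= weight t 0.
Proof.
  intros Ht. apply Rle_Rpower; [lra|].
  apply Ropp_le_contravar, Rmult_le_compat_r; [exact Ht | apply le_INR; lia].
Qed.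

Lemma weight_bounds (t : R) (k : nat) : 0 <= t -> 0 <= weight t k <= 1.
Proof.
  intros Ht. split; [apply Rlt_le, weight_pos|].
  unfold weight. rewrite <- (Rpower_O 2) by lra.
  apply Rle_Rpower; [lra|]. pose proof (pos_INR (S k)). nra.
Qed.

Lemma ex_series_weight (t : R) : 0 < t -> ex_series (weight t).
Proof.
  intros Ht. set (r := Rpower 2 (- t)).
  assert (Hr : 0 < r < 1).
  { split; [apply exp_pos|]. unfold r. rewrite <- (Rpower_O 2) by lra. apply Rpower_lt; lra. }
  apply (ex_series_ext (fun k => r ^ k * r)).
  - intros k. unfold weight. rewrite Rmult_comm, tech_pow_Rmult, <- (Rpower_pow (S k) r) by lra.
    unfold r. rewrite Rpower_mult. f_equal. ring.
  - apply ex_series_scal_r, ex_series_geom. rewrite Rabs_pos_eq; lra.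
Qed.

Lemma Pterm_pos (t q : R) (k : nat) : 0 < Pterm t q k.
Proof. apply Rmult_lt_0_compat; [apply weight_pos | apply exp_pos]. Qed.

Lemma Pterm_le_weight (t q : R) (k : nat) : q <= 0 -> Pterm t q k <= weight t k.
Proof.
  intros Hq. rewrite Pterm_weight. rewrite <- (Rmult_1_r (weight t k)) at 2.
  apply Rmult_le_compat_l; [apply Rlt_le, weight_pos|].
  rewrite <- exp_0. apply exp_le_exp.
  assert (0 < 2 ^ S k) by (apply pow_lt; lra). nra.
Qed.

Lemma Pterm_le_1 (t q : R) (k : nat) : 0 <= t -> q <= 0 -> Pterm t q k <= 1.
Proof. intros Ht Hq. eapply Rle_trans; [now apply Pterm_le_weight | now apply weight_bounds]. Qed.

Lemma Pnum_term_Pterm (t q : R) (k : nat) : Pnum_term t q k = 2 ^ S k * Pterm t q k.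
Proof.
  unfold Pnum_term. rewrite Pterm_weight. unfold weight.
  replace (- (INR (S k) * (t - 1))) with (- (INR (S k) * t) + INR (S k)) by ring.
  rewrite Rpower_plus, Rpower_pow by lra. ring.
Qed.

Lemma Pnum_term_pos (t q : R) (k : nat) : 0 < Pnum_term t q k.
Proof. rewrite Pnum_term_Pterm. apply Rmult_lt_0_compat; [apply pow_lt; lra | apply Pterm_pos]. Qed.

Lemma ex_series_Pterm (t q : R) : 0 <= t -> q < 0 -> ex_series (Pterm t q).
Proof.
  intros Ht Hq. apply (ex_series_ext (fun k => weight t k * (2 ^ S k) ^ 0 * exp (2 ^ S k * q))).
  - intros k. now rewrite pow_O, Rmult_1_r.
  - apply ex_series_pow_mul_exp; [exact Hq|]. intros k; now apply weight_bounds.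
Qed.

Lemma ex_series_Pnum_term (t q : R) : 0 <= t -> q < 0 -> ex_series (Pnum_term t q).
Proof.
  intros Ht Hq. apply (ex_series_ext (fun k => weight t k * (2 ^ S k) ^ 1 * exp (2 ^ S k * q))).
  - intros k.
    now rewrite Pnum_term_Pterm, Pterm_weight, pow_1, (Rmult_comm (weight t k)), Rmult_assoc.
  - apply ex_series_pow_mul_exp; [exact Hq|]. intros k; now apply weight_bounds.
Qed.

Lemma Series_Pterm_pos (t q : R) : 0 <= t -> q < 0 -> 0 < Series (Pterm t q).
Proof.
  intros Ht Hq. apply Rlt_le_trans with (sum_f_R0 (Pterm t q) 0); [apply Pterm_pos|].
  apply sum_f_R0_le_Series; [intros k; apply Rlt_le, Pterm_pos | now apply ex_series_Pterm].
Qed.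

Lemma Pterm_remainder_le (t q h : R) (k : nat) : Rabs h < - q / 2 ->
  Rabs (Pterm t (q + h) k - Pterm t q k - h * Pnum_term t q k)
  <= weight t k * (2 ^ S k) ^ 2 * exp (2 ^ S k * (q / 2)) * h ^ 2.
Proof.
  intros Hh.
  rewrite Pnum_term_Pterm, !Pterm_weight.
  set (x := 2 ^ S k). set (w := weight t k).
  assert (Hx : 0 < x) by (apply pow_lt; lra).
  assert (Hwe : 0 < w * exp (x * q))
    by (apply Rmult_lt_0_compat; [apply weight_pos | apply exp_pos]).
  replace (w * exp (x * (q + h)) - w * exp (x * q) - h * (x * (w * exp (x * q))))
    with (w * exp (x * q) * (exp (x * h) - 1 - x * h))
    by (rewrite Rmult_plus_distr_l, exp_plus; ring).
  assert (Hshift : exp (x * q) * exp (Rabs (x * h)) <= exp (x * (q / 2))).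
  { rewrite <- exp_plus. apply exp_le_exp.
    rewrite Rabs_mult, (Rabs_pos_eq x) by lra.
    assert (x * Rabs h <= x * (- q / 2)) by (apply Rmult_le_compat_l; lra). lra. }
  rewrite Rabs_mult, (Rabs_pos_eq (w * exp (x * q))) by lra.
  apply Rle_trans with (w * exp (x * q) * ((x * h) ^ 2 * exp (Rabs (x * h)))).
  { apply Rmult_le_compat_l; [lra | apply exp_taylor_remainder_le]. }
  replace (w * exp (x * q) * ((x * h) ^ 2 * exp (Rabs (x * h))))
    with (w * x ^ 2 * h ^ 2 * (exp (x * q) * exp (Rabs (x * h)))) by ring.
  replace (w * x ^ 2 * exp (x * (q / 2)) * h ^ 2)
    with (w * x ^ 2 * h ^ 2 * exp (x * (q / 2))) by ring.
  apply Rmult_le_compat_l; [|exact Hshift].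
  pose proof (weight_pos t k). pose proof (pow2_ge_0 x). pose proof (pow2_ge_0 h).
  apply Rmult_le_pos; [apply Rmult_le_pos|]; unfold w; lra.
Qed.

Lemma is_derive_Series_Pterm (t q : R) : 0 <= t -> q < 0 ->
  is_derive (fun x => Series (Pterm t x)) q (Series (Pnum_term t q)).
Proof.
  intros Ht Hq.
  apply (is_derive_Series_remainder (Pterm t) (Pnum_term t q)
           (fun k => weight t k * (2 ^ S k) ^ 2 * exp (2 ^ S k * (q / 2))) q (- q / 2)).
  - lra.
  - now apply ex_series_Pterm.
  - now apply ex_series_Pnum_term.
  - apply ex_series_pow_mul_exp; [lra|]. intros k; now apply weight_bounds.
  - intros h k Hh. now apply Pterm_remainder_le.
Qed.

Lemma is_derive_P (t q : R) : 0 <= t -> q < 0 ->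
  is_derive (fun x => P t x) q (Series (Pnum_term t q) / Series (Pterm t q)).
Proof.
  intros Ht Hq.
  exact (is_derive_comp ln (fun x => Series (Pterm t x)) q _ _
           (is_derive_ln _ (Series_Pterm_pos t q Ht Hq)) (is_derive_Series_Pterm t q Ht Hq)).
Qed.

Lemma dPdq_eq (t q : R) : 0 <= t -> q < 0 ->
  dPdq t q = Series (Pnum_term t q) / Series (Pterm t q).
Proof. intros Ht Hq. apply is_derive_unique, is_derive_P; assumption. Qed.

Lemma excess_factor_nonneg (k : nat) : 0 <= 2 ^ S k - 2.
Proof. simpl. pose proof (pow_R1_Rle 2 k). lra. Qed.

Lemma ex_series_excess (t q : R) : 0 <= t -> q < 0 ->
  ex_series (fun k => (2 ^ S k - 2) * Pterm t q k).
Proof.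
  intros Ht Hq.
  apply (ex_series_le (V := R_CompleteNormedModule) _ (Pnum_term t q));
    [|now apply ex_series_Pnum_term].
  intros k. change (Rabs ((2 ^ S k - 2) * Pterm t q k) <= Pnum_term t q k).
  pose proof (excess_factor_nonneg k). pose proof (Pterm_pos t q k).
  rewrite Rabs_pos_eq, Pnum_term_Pterm by nra. nra.
Qed.

Lemma dPdq_sub_2 (t q : R) : 0 <= t -> q < 0 ->
  dPdq t q - 2 = Series (fun k => (2 ^ S k - 2) * Pterm t q k) / Series (Pterm t q).
Proof.
  intros Ht Hq. rewrite dPdq_eq by assumption.
  pose proof (Series_Pterm_pos t q Ht Hq).
  rewrite (Series_ext (fun k => (2 ^ S k - 2) * Pterm t q k)
                      (fun k => Pnum_term t q k - 2 * Pterm t q k))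
    by (intros k; rewrite Pnum_term_Pterm; ring).
  rewrite Series_minus, Series_scal_l.
  - field. lra.
  - now apply ex_series_Pnum_term.
  - apply (ex_series_scal_l (V := R_NormedModule)). now apply ex_series_Pterm.
Qed.

Lemma dPdq_gt_2 (t q : R) : 0 <= t -> q < 0 -> 2 < dPdq t q.
Proof.
  intros Ht Hq. apply Rlt_0_minus. rewrite dPdq_sub_2 by assumption.
  apply Rdiv_lt_0_compat; [|now apply Series_Pterm_pos].
  apply Rlt_le_trans with (sum_f_R0 (fun k => (2 ^ S k - 2) * Pterm t q k) 1).
  - simpl. pose proof (Pterm_pos t q 0). pose proof (Pterm_pos t q 1). nra.
  - apply sum_f_R0_le_Series; [|now apply ex_series_excess].
    intros k. pose proof (excess_factor_nonneg k). pose proof (Pterm_pos t q k). nra.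
Qed.

Lemma excess_term_le (t q : R) (k : nat) : 0 <= t -> q <= -1 ->
  (2 ^ S k - 2) * Pterm t q k <= Pterm t q 0 * exp (q + 1) * (2 ^ S k * exp (2 ^ S k * (- 1 / 2))).
Proof.
  intros Ht Hq.
  assert (Hx : 0 < 2 ^ S k) by (apply pow_lt; lra).
  assert (Hrhs : 0 < Pterm t q 0 * exp (q + 1) * exp (2 ^ S k * (- 1 / 2))).
  { pose proof (Pterm_pos t q 0). pose proof (exp_pos (q + 1)).
    pose proof (exp_pos (2 ^ S k * (- 1 / 2))).
    apply Rmult_lt_0_compat; [apply Rmult_lt_0_compat|]; assumption. }
  destruct k as [|k].
  - replace (2 ^ 1 - 2) with 0 by ring. nra.
  - rewrite !Pterm_weight in *. set (x := 2 ^ S (S k)) in *.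
    assert (Hx4 : 4 <= x) by (unfold x; simpl; pose proof (pow_R1_Rle 2 k); lra).
    (* [x q <= 2 q + (q + 1) - x / 2] because [q <= -1] and [x >= 4] *)
    assert (Hexp : exp (x * q) <= exp (2 ^ 1 * q) * exp (q + 1) * exp (x * (- 1 / 2))).
    { rewrite <- !exp_plus. apply exp_le_exp. simpl. nra. }
    pose proof (weight_le_weight0 t (S k) Ht). pose proof (weight_pos t (S k)).
    pose proof (exp_pos (x * q)).
    apply Rle_trans with (x * (weight t 0 * (exp (2 ^ 1 * q) * exp (q + 1) * exp (x * (- 1 / 2))))).
    + apply Rmult_le_compat; try lra; [nra|]. apply Rmult_le_compat; lra.
    + right. ring.
Qed.

Lemma dPdq_le_2_add_exp : exists C, forall t q, 0 <= t -> q <= -1 -> dPdq t q <= 2 + C * exp q.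
Proof.
  set (g k := 2 ^ S k * exp (2 ^ S k * (- 1 / 2))).
  assert (Eg : ex_series g).
  { apply (ex_series_ext (fun k => 1 * (2 ^ S k) ^ 1 * exp (2 ^ S k * (- 1 / 2)))).
    - intros k. now rewrite Rmult_1_l, pow_1.
    - apply ex_series_pow_mul_exp; [lra | intros; lra]. }
  exists (Series g * exp 1). intros t q Ht Hq.
  assert (Hq0 : q < 0) by lra.
  pose proof (Series_Pterm_pos t q Ht Hq0) as HS.
  assert (HS0 : Pterm t q 0 <= Series (Pterm t q)).
  { apply (sum_f_R0_le_Series (Pterm t q) 0);
      [intros k; apply Rlt_le, Pterm_pos | now apply ex_series_Pterm]. }
  assert (Hexcess : Series (fun k => (2 ^ S k - 2) * Pterm t q k)
                    <= Pterm t q 0 * exp (q + 1) * Series g).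
  { rewrite <- Series_scal_l.
    apply Series_le; [|now apply (ex_series_scal_l (V := R_NormedModule))].
    intros k. pose proof (excess_factor_nonneg k). pose proof (Pterm_pos t q k).
    split; [nra | now apply excess_term_le]. }
  assert (Hg : 0 <= Series g).
  { assert (Hg0 : forall k, 0 <= g k).
    { intros k. pose proof (exp_pos (2 ^ S k * (- 1 / 2))). pose proof (pow_lt 2 (S k)).
      unfold g; nra. }
    apply Rle_trans with (sum_f_R0 g 0); [apply Hg0 | now apply sum_f_R0_le_Series]. }
  cut (dPdq t q - 2 <= exp (q + 1) * Series g).
  { rewrite exp_plus. lra. }
  rewrite dPdq_sub_2, Rle_div_l by assumption.
  apply Rle_trans with (1 := Hexcess).
  assert (0 <= exp (q + 1) * Series g) by (pose proof (exp_pos (q + 1)); nra).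
  nra.
Qed.

Lemma filterlim_dPdq_m_infty (t : R) : 0 <= t ->
  filterlim (fun q => dPdq t q) (Rbar_locally m_infty) (locally 2).
Proof.
  intros Ht. destruct dPdq_le_2_add_exp as [C HC].
  change (is_lim (fun q => dPdq t q) m_infty 2).
  apply (is_lim_le_le_loc (fun _ => 2) (fun q => 2 + C * exp q)).
  - exists (-1). intros q Hq. split; [apply Rlt_le, dPdq_gt_2 | apply HC]; lra.
  - apply is_lim_const.
  - replace (Finite 2) with (Finite (2 + C * 0)) by (f_equal; ring).
    apply is_lim_plus'; [apply is_lim_const | exact (is_lim_scal_l _ C _ 0 is_lim_exp_m)].
Qed.

Lemma Series_Pterm_le_weight (t q : R) : 0 < t -> q <= 0 -> Series (Pterm t q) <= Series (weight t).
Proof.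
  intros Ht Hq. apply Series_le; [|now apply ex_series_weight].
  intros k; split; [apply Rlt_le, Pterm_pos | now apply Pterm_le_weight].
Qed.

Lemma Series_Pnum_term_ge (t q : R) (K : nat) : 0 <= t <= 1 -> - / (2 * 2 ^ K) <= q < 0 ->
  INR K * / 2 <= Series (Pnum_term t q).
Proof.
  intros Ht [Hq1 Hq2].
  apply Series_ge_first_terms; [| now apply ex_series_Pnum_term |].
  - intros k. apply Rlt_le, Pnum_term_pos.
  - intros k Hk.
    assert (Hw : 1 <= Rpower 2 (- (INR (S k) * (t - 1)))).
    { rewrite <- (Rpower_O 2) at 1 by lra. apply Rle_Rpower; [lra|].
      pose proof (pos_INR (S k)). nra. }
    assert (HK : 2 ^ S k <= 2 ^ K) by (apply Rle_pow; [lra | lia]).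
    assert (HK0 : 0 < 2 ^ K) by (apply pow_lt; lra).
    assert (Hxq : - / 2 <= 2 ^ S k * q).
    { assert (2 ^ K * q >= - / 2).
      { apply Rle_ge. replace (- / 2) with (2 ^ K * - / (2 * 2 ^ K)) by (field; lra).
        apply Rmult_le_compat_l; lra. }
      nra. }
    pose proof (exp_ineq1_le (2 ^ S k * q)). pose proof (exp_pos (2 ^ S k * q)).
    unfold Pnum_term. nra.
Qed.

Lemma filterlim_dPdq_at_left_0 (t : R) : 0 < t <= 1 ->
  filterlim (fun q => dPdq t q) (at_left 0) (Rbar_locally p_infty).
Proof.
  intros [Ht0 Ht1] Q [M HM].
  set (A := Series (weight t)).
  assert (HA : 0 < A).
  { apply Rlt_le_trans with (sum_f_R0 (weight t) 0); [apply weight_pos|].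
    apply sum_f_R0_le_Series; [intros k; apply Rlt_le, weight_pos | now apply ex_series_weight]. }
  destruct (INR_archimed (/ (2 * A)) M) as [K HK]; [apply Rinv_0_lt_compat; lra|].
  assert (Hdelta : 0 < / (2 * 2 ^ K)) by (apply Rinv_0_lt_compat; pose proof (pow_lt 2 K); lra).
  exists (mkposreal _ Hdelta). intros q Hq Hq0. apply HM.
  change (Rabs (q + - 0) < / (2 * 2 ^ K)) in Hq. rewrite Ropp_0, Rplus_0_r in Hq.
  apply Rabs_def2 in Hq.
  pose proof (Series_Pnum_term_ge t q K ltac:(lra) ltac:(lra)) as HN.
  pose proof (Series_Pterm_le_weight t q Ht0 ltac:(lra)) as HS. fold A in HS.
  pose proof (Series_Pterm_pos t q ltac:(lra) Hq0) as HS0.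
  rewrite dPdq_eq by lra.
  apply Rlt_le_trans with (INR K * / 2 * / A); [rewrite Rmult_assoc, <- Rinv_mult; lra|].
  apply Rle_trans with (Series (Pnum_term t q) * / A).
  - apply Rmult_le_compat_r; [apply Rlt_le, Rinv_0_lt_compat|]; lra.
  - pose proof (pos_INR K). apply Rmult_le_compat_l; [lra | apply Rinv_le_contravar; lra].
Qed.

Lemma Series_Pterm_ge (t q : R) (L : nat) : 0 <= t -> q < 0 ->
  2 ^ L * t <= / 4 -> 2 ^ L * - q <= / 4 -> INR L * / 2 <= Series (Pterm t q).
Proof.
  intros Ht Hq HtL HqL.
  apply Series_ge_first_terms; [intros k; apply Rlt_le, Pterm_pos | now apply ex_series_Pterm |].
  intros k Hk.
  assert (Hln2 : ln 2 < 1).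
  { rewrite <- ln_exp. apply ln_increasing; [lra|]. pose proof (exp_ineq1 1 ltac:(lra)). lra. }
  assert (HkL : INR (S k) <= 2 ^ L)
    by (pose proof (INR_le_pow2 L); pose proof (le_INR _ _ Hk); lra).
  assert (HxL : 2 ^ S k <= 2 ^ L) by (apply Rle_pow; [lra | lia]).
  assert (Hw : INR (S k) * t * ln 2 <= / 4).
  { assert (0 <= INR (S k) * t) by (apply Rmult_le_pos; [apply pos_INR | lra]).
    assert (INR (S k) * t <= 2 ^ L * t) by (apply Rmult_le_compat_r; lra).
    pose proof ln_lt_2. nra. }
  assert (Hx : 2 ^ S k * - q <= / 4) by nra.
  unfold Pterm, Rpower. rewrite <- exp_plus.
  pose proof (exp_ineq1_le (- (INR (S k) * t) * ln 2 + 2 ^ S k * q)). lra.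
Qed.

Lemma Series_Pnum_term_ge_tail (t q : R) (K : nat) : 0 <= t -> q < 0 -> (0 < K)%nat ->
  2 ^ S K * (Series (Pterm t q) - INR K) <= Series (Pnum_term t q).
Proof.
  intros Ht Hq HK.
  pose proof (ex_series_Pterm t q Ht Hq) as ES. pose proof (ex_series_Pnum_term t q Ht Hq) as EN.
  rewrite (Series_incr_n _ K HK ES), (Series_incr_n _ K HK EN).
  assert (Hhead_num : 0 <= sum_f_R0 (Pnum_term t q) (pred K)).
  { apply cond_pos_sum. intros k. apply Rlt_le, Pnum_term_pos. }
  assert (Hhead : sum_f_R0 (Pterm t q) (pred K) <= INR K).
  { replace (INR K) with (sum_f_R0 (fun _ => 1) (pred K))
      by (rewrite sum_cte, Nat.succ_pred_pos; lia || ring).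
    apply sum_Rle. intros k _. apply Pterm_le_1; lra. }
  assert (Htail : 2 ^ S K * Series (fun k => Pterm t q (K + k)%nat)
                  <= Series (fun k => Pnum_term t q (K + k)%nat)).
  { rewrite <- Series_scal_l. apply Series_le; [|now apply (ex_series_incr_n (Pnum_term t q) K)].
    intros k. rewrite Pnum_term_Pterm.
    pose proof (Pterm_pos t q (K + k)). pose proof (pow_lt 2 (S K)).
    assert (2 ^ S K <= 2 ^ S (K + k)) by (apply Rle_pow; [lra | lia]). split; nra. }
  pose proof (pow_lt 2 (S K)). nra.
Qed.

Lemma dPdq_ge_pow2 (t q : R) (K : nat) : 0 <= t -> q < 0 -> (0 < K)%nat ->
  2 * INR K <= Series (Pterm t q) -> 2 ^ K <= dPdq t q.
Proof.
  intros Ht Hq HK HS.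
  pose proof (Series_Pnum_term_ge_tail t q K Ht Hq HK) as HN.
  pose proof (Series_Pterm_pos t q Ht Hq).
  rewrite dPdq_eq, <- Rle_div_r by assumption.
  (* [S - K >= S / 2], so [N >= 2 ^ S K * S / 2] *)
  simpl pow in HN. pose proof (pow_lt 2 K). nra.
Qed.

Lemma dPdq_unbounded_at_origin (M : R) : exists delta : posreal, forall t q : R,
  0 <= t -> q < 0 -> Rabs t < delta -> Rabs q < delta -> M < dPdq t q.
Proof.
  destruct (INR_archimed 1 M ltac:(lra)) as [K0 HK0]. rewrite Rmult_1_r in HK0.
  set (K := S K0). set (L := (4 * K)%nat).
  assert (HL : 0 < 2 ^ L) by (apply pow_lt; lra).
  assert (Hdelta : 0 < / (4 * 2 ^ L)) by (apply Rinv_0_lt_compat; lra).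
  exists (mkposreal _ Hdelta). intros t q Ht Hq Htd Hqd. cbn [pos] in Htd, Hqd.
  rewrite Rabs_pos_eq in Htd by lra. rewrite Rabs_left in Hqd by lra.
  assert (Hsmall : forall x, 0 <= x < / (4 * 2 ^ L) -> 2 ^ L * x <= / 4).
  { intros x Hx. replace (/ 4) with (2 ^ L * / (4 * 2 ^ L)) by (field; lra).
    apply Rmult_le_compat_l; lra. }
  pose proof (Series_Pterm_ge t q L Ht Hq (Hsmall t ltac:(lra)) (Hsmall (- q) ltac:(lra))) as HS.
  assert (HLK : INR L * / 2 = 2 * INR K) by (unfold L; rewrite mult_INR; simpl; field).
  pose proof (dPdq_ge_pow2 t q K Ht Hq ltac:(unfold K; lia) ltac:(lra)).
  pose proof (INR_le_pow2 K). unfold K in *. rewrite S_INR in *. lra.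
Qed.

Theorem proposition5p2 :
  (* formula for the partial derivative on D_1 = {t >= 0, q < 0} *)
  (forall t q : R, 0 <= t -> q < 0 ->
     is_derive (fun x => P t x) q
       (Series (Pnum_term t q) / Series (Pterm t q))) /\
  (* (1) for fixed 0 < t <= 1, dP/dq -> +oo as q -> 0^- *)
  (forall t : R, 0 < t <= 1 ->
     filterlim (fun q => dPdq t q) (at_left 0) (Rbar_locally p_infty)) /\
  (* (2) dP/dq(t,q) -> +oo as (t,q) -> (0,0) within D_1 *)
  (forall M : R, exists delta : posreal,
     forall t q : R, 0 <= t -> q < 0 -> Rabs t < delta -> Rabs q < delta ->
       M < dPdq t q) /\
  (* (3) dP/dq > 2 on D_1, and dP/dq -> 2 as q -> -oo for fixed t >= 0 *)
  (forall t q : R, 0 <= t -> q < 0 -> 2 < dPdq t q) /\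
  (forall t : R, 0 <= t ->
     filterlim (fun q => dPdq t q) (Rbar_locally m_infty) (locally 2)).
Proof.
  exact (conj is_derive_P (conj filterlim_dPdq_at_left_0
           (conj dPdq_unbounded_at_origin (conj dPdq_gt_2 filterlim_dPdq_m_infty)))).
Qed.
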